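(* Consider a two-player bilinear game with $f_1(x_1,x_2)=x_1^\top Ax_2$, $f_2(x_1,x_2)=x_1^\top B^\top x_2$, $A\in\mathbb{R}^{n_1\times n_2}$, $B\in\mathbb{R}^{n_2\times n_1}$, step sizes $\gamma_1,\gamma_2>0$, and let $W$ be either $W_s$ (simultaneous gradient play) or $W_a$ (alternating gradient play) as defined in the context. Write $a_{pq}$, $b_{pq}$ for the $(p,q)$ entries of $A$, $B$. (1) If coordinate $x_{2,j}$ is disturbance decoupled from coordinate $x_{1,i}$, then $b_{ji}=0$ and $\sum_{q=1}^{n_2}b_{qi}\sum_{\ell=1}^{n_1}a_{\ell q}b_{j\ell}=0$. (2) If coordinate $x_{1,j}$ is disturbance decoupled from coordinate $x_{2,i}$, then $a_{ji}=0$ and $\sum_{q=1}^{n_1}a_{qi}\sum_{\ell=1}^{n_2}b_{\ell q}a_{j\ell}=0$.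
   Context: Player 1 has action $x_1=(x_{1,1},\ldots,x_{1,n_1})\in\mathbb{R}^{n_1}$, player 2 has $x_2=(x_{2,1},\ldots,x_{2,n_2})\in\mathbb{R}^{n_2}$; the joint vector $x=(x_1,x_2)\in\mathbb{R}^{n_1+n_2}$. Simultaneous gradient play $x_1^{k+1}=x_1^k-\gamma_1Ax_2^k$, $x_2^{k+1}=x_2^k-\gamma_2Bx_1^k$ is the linear iteration $x^{k+1}=W_sx^k$ with $W_s=\begin{bmatrix}I&-\gamma_1A\\-\gamma_2B&I\end{bmatrix}$. Alternating gradient play $x_1^{k+1}=x_1^k-\gamma_1Ax_2^k$, $x_2^{k+1}=x_2^k-\gamma_2Bx_1^{k+1}$ is the linear iteration $x^{k+1}=W_ax^k$ with $W_a=\begin{bmatrix}I&-\gamma_1A\\-\gamma_2B&I+\gamma_1\gamma_2BA\end{bmatrix}$. Each coordinate is treated as a separate scalar player whose game-graph matrix is $W$. For coordinates $p\neq q$ of $\mathbb{R}^{n_1+n_2}$, with $\gamma_{(q)}$ the step size of the player owning coordinate $q$, coordinate $p$ is disturbance decoupled from coordinate $q$ if for every initial $x^0$ and every real sequence $(\delta^k)_{k\ge0}$, the iterations $x^{k+1}=Wx^k$ and $y^{k+1}=Wy^k-\gamma_{(q)}\delta^ke_q$ with $y^0=x^0$ satisfy $y^k_p=x^k_p$ for all $k\ge0$ ($e_q$ the $q$-th standard basis vector). *)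

From mathcomp Require Import all_boot all_order all_algebra.
Set Implicit Arguments. Unset Strict Implicit. Unset Printing Implicit Defensive.
Import Order.TTheory GRing.Theory Num.Theory.
Local Open Scope ring_scope.

Section Game.
Variables (R : realFieldType) (n1 n2 : nat).

Definition Wsim (g1 g2 : R) (A : 'M[R]_(n1, n2)) (B : 'M[R]_(n2, n1))
  : 'M[R]_(n1 + n2) :=
  block_mx (1%:M : 'M[R]_n1) (- (g1 *: A)) (- (g2 *: B)) (1%:M : 'M[R]_n2).

Definition Walt (g1 g2 : R) (A : 'M[R]_(n1, n2)) (B : 'M[R]_(n2, n1))
  : 'M[R]_(n1 + n2) :=
  block_mx (1%:M : 'M[R]_n1) (- (g1 *: A)) (- (g2 *: B))
           ((1%:M : 'M[R]_n2) + (g1 * g2) *: (B *m A)).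
End Game.

Section Iter.
Variables (R : realFieldType) (n : nat).

Fixpoint lin_iter (W : 'M[R]_n) (x0 : 'cV[R]_n) (k : nat) : 'cV[R]_n :=
  match k with
  | 0 => x0
  | k'.+1 => W *m lin_iter W x0 k'
  end.

Fixpoint dist_iter (W : 'M[R]_n) (x0 : 'cV[R]_n) (q : 'I_n) (gq : R)
  (delta : nat -> R) (k : nat) : 'cV[R]_n :=
  match k with
  | 0 => x0
  | k'.+1 => W *m dist_iter W x0 q gq delta k' - (gq * delta k') *: delta_mx q 0
  end.

(* coordinate p is disturbance decoupled from coordinate q, where gq is the
   step size of the player owning coordinate q *)
Definition dist_decoupled (W : 'M[R]_n) (gq : R) (p q : 'I_n) : Prop :=
  forall (x0 : 'cV[R]_n) (delta : nat -> R) (k : nat),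
    dist_iter W x0 q gq delta k p 0 = lin_iter W x0 k p 0.
End Iter.

(* Starting from x^0 = 0, a unit impulse at time 0 makes the disturbed state
   at time k+1 equal to -gamma_q W^k e_q, so decoupling of p from q forces
   (W^k)_pq = 0 for every k >= 1, and hence ((W - 1)^k)_pq = 0 for every k as
   p <> q.  With X = -g1 A and Y = -g2 B, W_s - 1 is the block matrix
   [0 X; Y 0] and W_a - 1 is [0 X; Y YX].  Their first powers expose the
   entries of X and Y, while the cube of the former and the square of the
   latter both have off-diagonal blocks XYX and YXY, i.e. nonzero multiples of
   ABA and BAB. *)

From mathcomp Require Import all_boot all_order all_algebra ring.
Set Implicit Arguments. Unset Strict Implicit. Unset Printing Implicit Defensive.
Import Order.TTheory GRing.Theory Num.Theory.
Local Open Scope ring_scope.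

Section DisturbanceDecoupling.
Variables (R : realFieldType) (n : nat) (W : 'M[R]_n).

Lemma lin_iter0 k : lin_iter W 0 k = 0.
Proof. by elim: k => //= k ->; rewrite mulmx0. Qed.

Definition impulse (k : nat) : R := (k == 0%N)%:R.

Lemma dist_iter_impulse q gq k :
  dist_iter W 0 q gq impulse k.+1 = - gq *: (W ^+ k *m delta_mx q 0).
Proof.
elim: k => [|k IHk] /=; first by rewrite mulmx0 sub0r mulr1 mul1mx scaleNr.
by move: IHk => /= ->; rewrite mulr0 scale0r subr0 -scalemxAr exprS mulmxA.
Qed.

Lemma dist_decoupled_exprS gq p q : gq != 0 -> dist_decoupled W gq p q ->
  forall k, (W ^+ k.+1) p q = 0.
Proof.
move=> gq_neq0 decoupled k.
have := decoupled 0 impulse k.+2.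
rewrite lin_iter0 dist_iter_impulse -colE !mxE => /eqP.
by rewrite mulf_eq0 oppr_eq0 (negPf gq_neq0) => /eqP.
Qed.

(* (W - 1)^k is a combination of powers of W, and the zeroth power 1 vanishes
   off the diagonal. *)
Lemma dist_decoupled_subr1X gq p q : p != q -> gq != 0 ->
  dist_decoupled W gq p q -> forall k, ((W - 1) ^+ k) p q = 0.
Proof.
move=> p_neq_q gq_neq0 /(dist_decoupled_exprS gq_neq0) Wpq k.
suff {k} subr1XW k m : ((W - 1) ^+ k * W ^+ m) p q = 0.
  by have := subr1XW k 0%N; rewrite mulr1.
elim: k m => [|k IHk] m.
  by rewrite mul1r; case: m => [|m]; rewrite ?Wpq // expr0 mxE (negPf p_neq_q).
rewrite exprSr -mulrA mulrBl mul1r -exprS mulrBr.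
by rewrite mxE IHk add0r mxE IHk oppr0.
Qed.

End DisturbanceDecoupling.

Section OffDiagonalBlocks.
Variables (R : pzRingType) (n1 n2 : nat).
Variables (X : 'M[R]_(n1, n2)) (Y : 'M[R]_(n2, n1)).

Lemma block_mx_offdiag_cube :
  (block_mx 0 X Y 0) ^+ 3 = block_mx 0 (X *m Y *m X) (Y *m X *m Y) 0.
Proof.
rewrite !exprS expr0 mulr1 -!mulmxE !mulmx_block.
by rewrite !(mul0mx, mulmx0, add0r, addr0) !mulmxA.
Qed.

Lemma block_mx_offdiag_mul_sqr :
  (block_mx 0 X Y (Y *m X)) ^+ 2 =
  block_mx (X *m Y) (X *m Y *m X) (Y *m X *m Y) (Y *m X + Y *m X *m Y *m X).
Proof.
rewrite expr2 -mulmxE mulmx_block.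
by rewrite !(mul0mx, mulmx0, add0r, addr0) !mulmxA.
Qed.

End OffDiagonalBlocks.

Section TripleProduct.
Variables (R : comPzRingType) (m n p r : nat).
Variables (M : 'M[R]_(m, n)) (N : 'M[R]_(n, p)) (P : 'M[R]_(p, r)).

Lemma mulmx3E i j :
  (M *m N *m P) i j = \sum_(q < p) P q j * (\sum_(l < n) N l q * M i l).
Proof.
rewrite -mulmxA mxE; under eq_bigr => l _ do rewrite mxE big_distrr.
rewrite exchange_big /=; apply: eq_bigr => q _; rewrite big_distrr /=.
by apply: eq_bigr => l _; ring.
Qed.

Lemma mulmx_oppZ3 a b c :
  (- (a *: M)) *m (- (b *: N)) *m (- (c *: P)) = - (a * b * c) *: (M *m N *m P).
Proof.
rewrite !(mulNmx, mulmxN, opprK) -!scalemxAl -!scalemxAr !scalerA.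
by rewrite -scalemxAl scalerA mulrAC scaleNr.
Qed.

End TripleProduct.

Section GradientPlay.
Variables (R : realFieldType) (n1 n2 : nat) (g1 g2 : R).
Variables (A : 'M[R]_(n1, n2)) (B : 'M[R]_(n2, n1)).

Lemma Wsim_subr1 :
  Wsim g1 g2 A B - 1 = block_mx 0 (- (g1 *: A)) (- (g2 *: B)) 0.
Proof.
rewrite /Wsim -idmxE (scalar_mx_block n1 n2) opp_block_mx add_block_mx.
by rewrite !subrr !oppr0 !addr0.
Qed.

Lemma Walt_subr1 :
  Walt g1 g2 A B - 1 =
  block_mx 0 (- (g1 *: A)) (- (g2 *: B)) ((- (g2 *: B)) *m (- (g1 *: A))).
Proof.
rewrite /Walt -idmxE (scalar_mx_block n1 n2) opp_block_mx add_block_mx.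
rewrite subrr !oppr0 !addr0 addrC addKr mulNmx mulmxN opprK.
by rewrite -scalemxAl -scalemxAr scalerA mulrC.
Qed.

End GradientPlay.

Theorem corollary4 (R : realFieldType) (n1 n2 : nat)
  (A : 'M[R]_(n1, n2)) (B : 'M[R]_(n2, n1)) (g1 g2 : R)
  (hg1 : 0 < g1) (hg2 : 0 < g2) (W : 'M[R]_(n1 + n2))
  (hW : W = Wsim g1 g2 A B \/ W = Walt g1 g2 A B) :
  (forall (i : 'I_n1) (j : 'I_n2),
     dist_decoupled W g1 (rshift n1 j) (lshift n2 i) ->
     B j i = 0 /\
     \sum_(q < n2) B q i * (\sum_(l < n1) A l q * B j l) = 0) /\
  (forall (i : 'I_n2) (j : 'I_n1),
     dist_decoupled W g2 (lshift n2 j) (rshift n1 i) ->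
     A j i = 0 /\
     \sum_(q < n1) A q i * (\sum_(l < n2) B l q * A j l) = 0).
Proof.
have g1_neq0 : g1 != 0 by rewrite gt_eqF.
have g2_neq0 : g2 != 0 by rewrite gt_eqF.
set X := - (g1 *: A); set Y := - (g2 *: B).
have [D W_subr1] : exists D, W - 1 = block_mx 0 X Y D.
  by case: hW => ->; eexists; [apply: Wsim_subr1 | apply: Walt_subr1].
have [k [Dul [Ddr W_subr1X]]] : exists k Dul Ddr,
    (W - 1) ^+ k = block_mx Dul (X *m Y *m X) (Y *m X *m Y) Ddr.
  case: hW => ->; [exists 3%N; rewrite Wsim_subr1 block_mx_offdiag_cube
                  | exists 2%N; rewrite Walt_subr1 block_mx_offdiag_mul_sqr];
  by do 2 eexists.
have opp_mul_eq0 (c x : R) : c != 0 -> - (c * x) = 0 -> x = 0.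
  by move=> c_neq0 /eqP; rewrite oppr_eq0 mulf_eq0 (negPf c_neq0) => /eqP.
split=> i j decoupled.
- have {}decoupled :=
    dist_decoupled_subr1X (negbT (eq_rlshift _ _)) g1_neq0 decoupled.
  split.
    have := decoupled 1%N; rewrite expr1 W_subr1 block_mxEdl !mxE.
    exact: opp_mul_eq0 g2_neq0.
  rewrite -mulmx3E; apply: (opp_mul_eq0 (g2 * g1 * g2)); first by rewrite !mulf_neq0.
  by have := decoupled k; rewrite W_subr1X block_mxEdl mulmx_oppZ3 mxE mulNr.
- have {}decoupled :=
    dist_decoupled_subr1X (negbT (eq_lrshift _ _)) g2_neq0 decoupled.
  split.
    have := decoupled 1%N; rewrite expr1 W_subr1 block_mxEur !mxE.
    exact: opp_mul_eq0 g1_neq0.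
  rewrite -mulmx3E; apply: (opp_mul_eq0 (g1 * g2 * g1)); first by rewrite !mulf_neq0.
  by have := decoupled k; rewrite W_subr1X block_mxEur mulmx_oppZ3 mxE mulNr.
Qed.
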